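(* Let $X$ be a topological space and let $A\subseteq X$ be an open subset whose closure $\overline{A}$ in $X$ is path connected. Let $p:X\to X/A$ be the quotient map and $*=p(A)$. Then for every $a\in A$, the image of the induced continuous homomorphism $p_*:\pi_1^{top}(X,a)\to \pi_1^{top}(X/A,* )$ is dense, i.e. $\overline{p_*\pi_1^{top}(X,a)}=\pi_1^{top}(X/A,* )$.
   Context: For $A\subseteq X$, $X/A$ denotes the quotient space obtained from $X$ by identifying all points of $A$ to a single point $*$, with quotient map $p$. For a pointed space $(X,x)$, $\Omega(X,x)$ is the space of loops $[0,1]\to X$ based at $x$ with the compact-open topology, and the topological fundamental group $\pi_1^{top}(X,x)$ is the fundamental group $\pi_1(X,x)$ equipped with the quotient topology with respect to the canonical surjection $\Omega(X,x)\to\pi_1(X,x)$ sending a loop to its homotopy class (rel endpoints). A based continuous map $f$ induces a continuous homomorphism $f_*$ of topological fundamental groups. *)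

From Stdlib Require Import Reals Lra List.
Open Scope R_scope.

Definition topology (T : Type) := (T -> Prop) -> Prop.

Definition is_topology {T : Type} (O : topology T) : Prop :=
  O (fun _ => True) /\ O (fun _ => False) /\
  (forall U V, O U -> O V -> O (fun x => U x /\ V x)) /\
  (forall F : (T -> Prop) -> Prop,
      (forall U, F U -> O U) -> O (fun x => exists U, F U /\ U x)).

Definition generated {T : Type} (B : (T -> Prop) -> Prop) : topology T :=
  fun U => forall O : topology T, is_topology O -> (forall V, B V -> O V) -> O U.

Definition continuous {S T : Type} (OS : topology S) (OT : topology T) (f : S -> T) : Prop :=
  forall V, OT V -> OS (fun x => V (f x)).

Definition closure {T : Type} (O : topology T) (P : T -> Prop) : T -> Prop :=
  fun x => forall U, O U -> U x -> exists y, P y /\ U y.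

Definition dense {T : Type} (O : topology T) (P : T -> Prop) : Prop :=
  forall x, closure O P x.

Definition compact {T : Type} (O : topology T) (K : T -> Prop) : Prop :=
  forall F : (T -> Prop) -> Prop,
    (forall U, F U -> O U) ->
    (forall x, K x -> exists U, F U /\ U x) ->
    exists l : list (T -> Prop),
      (forall U, In U l -> F U) /\ (forall x, K x -> exists U, In U l /\ U x).

Definition subspace {T : Type} (O : topology T) (P : T -> Prop) : topology {x | P x} :=
  fun V => exists U, O U /\ forall x : {x | P x}, V x <-> U (proj1_sig x).

Definition prod_top {S T : Type} (OS : topology S) (OT : topology T) : topology (S * T) :=
  generated (fun W => exists U V, OS U /\ OT V /\
                        forall z, W z <-> (U (fst z) /\ V (snd z))).

Definition R_open : topology R :=
  fun U => forall x, U x -> exists eps, 0 < eps /\ forall y, Rabs (y - x) < eps -> U y.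

Definition I := {r : R | 0 <= r <= 1}.
Definition I_top : topology I := subspace R_open (fun r => 0 <= r <= 1).

Lemma I0_pf : 0 <= 0 <= 1. Proof. lra. Qed.
Lemma I1_pf : 0 <= 1 <= 1. Proof. lra. Qed.
Definition i0 : I := exist _ 0 I0_pf.
Definition i1 : I := exist _ 1 I1_pf.

Definition path_connected {X : Type} (OX : topology X) (P : X -> Prop) : Prop :=
  forall x y, P x -> P y ->
    exists g : I -> X, continuous I_top OX g /\ g i0 = x /\ g i1 = y /\ forall t, P (g t).

Definition is_loop {Y : Type} (OY : topology Y) (y : Y) (g : I -> Y) : Prop :=
  continuous I_top OY g /\ g i0 = y /\ g i1 = y.

Definition Loop {Y : Type} (OY : topology Y) (y : Y) := {g : I -> Y | is_loop OY y g}.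

(** Compact-open topology on Omega(Y,y): generated by the sets
    V(K,U) = {g | g(K) ⊆ U}, K ⊆ [0,1] compact, U ⊆ Y open. *)
Definition loop_top {Y : Type} (OY : topology Y) (y : Y) : topology (Loop OY y) :=
  generated (fun W => exists (K : I -> Prop) (U : Y -> Prop),
               compact I_top K /\ OY U /\
               forall g : Loop OY y, W g <-> (forall t, K t -> U (proj1_sig g t))).

Definition homotopic_rel {Y : Type} (OY : topology Y) (y : Y) (g h : I -> Y) : Prop :=
  exists H : I * I -> Y, continuous (prod_top I_top I_top) OY H /\
    (forall s, H (s, i0) = g s) /\ (forall s, H (s, i1) = h s) /\
    (forall t, H (i0, t) = y) /\ (forall t, H (i1, t) = y).

Definition hclass {Y : Type} (OY : topology Y) (y : Y) (g : I -> Y) : (I -> Y) -> Prop :=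
  fun h => is_loop OY y h /\ homotopic_rel OY y g h.

Definition Pi1 {Y : Type} (OY : topology Y) (y : Y) :=
  {C : (I -> Y) -> Prop | exists g, is_loop OY y g /\ C = hclass OY y g}.

Definition cls {Y : Type} (OY : topology Y) (y : Y) (g : Loop OY y) : Pi1 OY y :=
  exist _ (hclass OY y (proj1_sig g))
        (ex_intro _ (proj1_sig g) (conj (proj2_sig g) eq_refl)).

(** Quotient topology on pi_1 w.r.t. Omega(Y,y) -> pi_1(Y,y). *)
Definition pi1_top {Y : Type} (OY : topology Y) (y : Y) : topology (Pi1 OY y) :=
  fun W => loop_top OY y (fun g => W (cls OY y g)).

(** The quotient X/A: classes of the relation "x = y or both in A". *)
Definition qrel {X : Type} (A : X -> Prop) (x : X) : X -> Prop :=
  fun z => x = z \/ (A x /\ A z).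

Definition QT {X : Type} (A : X -> Prop) := {S : X -> Prop | exists x, S = qrel A x}.

Definition qmap {X : Type} (A : X -> Prop) (x : X) : QT A :=
  exist _ (qrel A x) (ex_intro _ x eq_refl).

Definition quot_top {X : Type} (OX : topology X) (A : X -> Prop) : topology (QT A) :=
  fun V => OX (fun x => V (qmap A x)).

Definition pstar_image {X : Type} (OX : topology X) (A : X -> Prop) (a : X)
  : Pi1 (quot_top OX A) (qmap A a) -> Prop :=
  fun c => exists g : I -> X, is_loop OX a g /\
    proj1_sig c = hclass (quot_top OX A) (qmap A a) (fun t => qmap A (g t)).

(** Given a loop g at * in X/A and a basic neighbourhood
   W = V(K_1,U_1) /\ ... /\ V(K_n,U_n) of g in the loop space, we build a loop
   f at a in X with [p o f] in the image of W in pi_1.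

   Two observations drive the construction.
   - Every open set of X/A that meets p(cl A) contains *, because every
     neighbourhood of a point of cl A meets A.  Hence if two loops u, w agree
     up to such "specialisations" pointwise (every neighbourhood of u(t)
     contains w(t)), they are homotopic rel endpoints: take u at time 0 and w
     at all positive times.  So [p o f] = [g'] whenever p(f t) specialises to
     g'(t) for every t.
   - The compact set Q, union of those K_i with * not in U_i, is mapped by g
     outside p(cl A), a closed set.  So Q is covered by finitely many closed
     "pieces" [u,v] of (0,1) on which g avoids *, with g(u), g(v) in p(cl A).

   We let g' equal g on the pieces and * elsewhere (g' still lies in W), and
   f lift g on the pieces; on each gap between consecutive pieces f runs
   along a path inside cl A joining the lifts of the ends. *)

From Pilot Require Import Defs.
From Stdlib Require Import Reals Lra List.
From Stdlib Require Import Classical ClassicalEpsilon FunctionalExtensionality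
  PropExtensionality ProofIrrelevance.
Open Scope R_scope.

Lemma pred_ext {T} (P Q : T -> Prop) : (forall x, P x <-> Q x) -> P = Q.
Proof.
  intro H. apply functional_extensionality; intro x.
  apply propositional_extensionality, H.
Qed.

Lemma sig_ext {T} (P : T -> Prop) (u v : sig P) : proj1_sig u = proj1_sig v -> u = v.
Proof.
  destruct u as [u pu], v as [v pv]; simpl; intros ->.
  f_equal; apply proof_irrelevance.
Qed.

Lemma open_ext {T} (O : topology T) (P Q : T -> Prop) :
  O P -> (forall x, P x <-> Q x) -> O Q.
Proof. intros H E. rewrite <- (pred_ext P Q E). exact H. Qed.

Lemma open_full {T} (O : topology T) : is_topology O -> O (fun _ => True).
Proof. intros [H _]; exact H. Qed.

Lemma open_inter {T} (O : topology T) U V :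
  is_topology O -> O U -> O V -> O (fun x => U x /\ V x).
Proof. intros [_ [_ [Hi _]]]; auto. Qed.

Lemma open_union {T} (O : topology T) U V :
  is_topology O -> O U -> O V -> O (fun x => U x \/ V x).
Proof.
  intros [_ [_ [_ Hu]]] HU HV.
  apply open_ext with (fun x => exists W, (W = U \/ W = V) /\ W x).
  - apply Hu. intros W [-> | ->]; auto.
  - intro x; split.
    + intros [W [[-> | ->] Wx]]; auto.
    + intros [Ux | Vx]; [exists U | exists V]; auto.
Qed.

Lemma open_of_local {T} (O : topology T) (P : T -> Prop) : is_topology O ->
  (forall x, P x -> exists U, O U /\ U x /\ forall y, U y -> P y) -> O P.
Proof.
  intros [_ [_ [_ Hu]]] H.
  apply open_ext with (fun x => exists U, (O U /\ forall y, U y -> P y) /\ U x).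
  - apply Hu. intros U [HU _]; exact HU.
  - intro x; split.
    + intros [U [[_ HU] Ux]]; auto.
    + intro Px. destruct (H x Px) as [U [OU [Ux HU]]]. exists U; auto.
Qed.

Lemma closure_compl_open {T} (O : topology T) (P : T -> Prop) :
  is_topology O -> O (fun x => ~ closure O P x).
Proof.
  intros HO. apply open_of_local; auto. intros x Hx.
  apply NNPP; intro Hn. apply Hx. intros U OU Ux. apply NNPP; intro HnP. apply Hn.
  exists U. split; [exact OU | split; [exact Ux |]].
  intros y Uy Hy. apply HnP. destruct (Hy U OU Uy) as [z Hz]. eauto.
Qed.

Lemma subset_closure {T} (O : topology T) (P : T -> Prop) x : P x -> closure O P x.
Proof. intros Px U _ Ux. exists x; auto. Qed.

Lemma generated_topology {T} (B : (T -> Prop) -> Prop) : is_topology (generated B).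
Proof.
  unfold generated; repeat split.
  - intros O [H _] _. exact H.
  - intros O [_ [H _]] _. exact H.
  - intros U V HU HV O HO HB. destruct HO as [h1 [h2 [h3 h4]]].
    apply h3; [apply HU | apply HV]; auto; repeat split; auto.
  - intros F HF O HO HB. destruct HO as [h1 [h2 [h3 h4]]]. apply h4.
    intros U FU. apply HF; auto. repeat split; auto.
Qed.

Definition finite_meets {T} (B : (T -> Prop) -> Prop) : topology T :=
  fun U => forall x, U x -> exists l : list (T -> Prop),
    (forall V, In V l -> B V /\ V x) /\ (forall y, (forall V, In V l -> V y) -> U y).

Lemma finite_meets_topology {T} (B : (T -> Prop) -> Prop) : is_topology (finite_meets B).
Proof.
  unfold finite_meets; repeat split.
  - intros x _. exists nil. split; [intros V [] | auto].
  - intros x [].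
  - intros U V HU HV x [Ux Vx].
    destruct (HU x Ux) as [l1 [A1 B1]]. destruct (HV x Vx) as [l2 [A2 B2]].
    exists (l1 ++ l2). split.
    + intros W HW. apply in_app_iff in HW. destruct HW; auto.
    + intros y Hy. split; [apply B1 | apply B2]; intros W HW; apply Hy, in_app_iff; auto.
  - intros F HF x [U [FU Ux]]. destruct (HF U FU x Ux) as [l [A1 B1]].
    exists l. split; auto. intros y Hy. exists U; auto.
Qed.

Lemma generated_open_basic {T} (B : (T -> Prop) -> Prop) U x :
  generated B U -> U x ->
  exists l : list (T -> Prop),
    (forall V, In V l -> B V /\ V x) /\ (forall y, (forall V, In V l -> V y) -> U y).
Proof.
  intros H Ux. apply (H (finite_meets B) (finite_meets_topology B)); auto.
  intros V BV y Vy. exists (V :: nil). split.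
  - intros W [<- | []]; auto.
  - intros z Hz. apply Hz; left; auto.
Qed.

Lemma continuous_into_generated {S T} (OS : topology S) (B : (T -> Prop) -> Prop) (f : S -> T) :
  is_topology OS -> (forall V, B V -> OS (fun x => V (f x))) ->
  continuous OS (generated B) f.
Proof.
  intros HS HB V HV. apply (HV (fun V => OS (fun x => V (f x)))); auto.
  destruct HS as [h1 [h2 [h3 h4]]]. repeat split.
  - exact h1.
  - exact h2.
  - intros U W; apply h3.
  - intros F HF.
    apply open_ext with (fun x => exists U, (exists W, F W /\ U = fun y => W (f y)) /\ U x).
    + apply h4. intros U [W [FW ->]]. apply HF, FW.
    + intro x; split.
      * intros [U [[W [FW ->]] Ux]]; eauto.
      * intros [W [FW Wx]]. exists (fun y => W (f y)); eauto.
Qed.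

Lemma subspace_topology {T} (O : topology T) P :
  is_topology O -> is_topology (subspace O P).
Proof.
  intros HO. pose proof HO as [h1 [h2 [h3 h4]]]. unfold subspace; repeat split.
  - exists (fun _ => True). split; auto. intro; tauto.
  - exists (fun _ => False). split; auto. intro; tauto.
  - intros U V [U' [HU' EU]] [V' [HV' EV]]. exists (fun x => U' x /\ V' x).
    split; auto. intro x. rewrite EU, EV. tauto.
  - intros F HF.
    exists (fun y => exists U, (exists V, F V /\ O U /\
                                 forall x, V x <-> U (proj1_sig x)) /\ U y).
    split.
    + apply h4. intros U [V [_ [OU _]]]; auto.
    + intro x; split.
      * intros [V [FV Vx]]. destruct (HF V FV) as [U [OU EU]].
        exists U. split; eauto. apply EU; auto.
      * intros [U [[V [FV [OU EU]]] Ux]]. exists V; split; auto. apply EU; auto.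
Qed.

Lemma compact_ext {T} (O : topology T) K K' :
  Defs.compact O K -> (forall x, K x <-> K' x) -> Defs.compact O K'.
Proof. intros H E. rewrite <- (pred_ext K K' E). exact H. Qed.

Lemma compact_empty {T} (O : topology T) : Defs.compact O (fun _ => False).
Proof. intros F _ _. exists nil. split; [intros U [] | intros x []]. Qed.

Lemma compact_union {T} (O : topology T) K1 K2 :
  Defs.compact O K1 -> Defs.compact O K2 -> Defs.compact O (fun x => K1 x \/ K2 x).
Proof.
  intros H1 H2 F HF Hc.
  destruct (H1 F HF) as [l1 [A1 B1]]. { intros x Kx; apply Hc; auto. }
  destruct (H2 F HF) as [l2 [A2 B2]]. { intros x Kx; apply Hc; auto. }
  exists (l1 ++ l2). split.
  - intros U HU. apply in_app_iff in HU; destruct HU; auto.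
  - intros x [Kx | Kx];
      [destruct (B1 x Kx) as [U [HU Ux]] | destruct (B2 x Kx) as [U [HU Ux]]];
      exists U; split; auto; apply in_app_iff; auto.
Qed.

Lemma compact_finite_union {T E} (O : topology T) (lk : list ((T -> Prop) * E)) (Rl : E -> Prop) :
  (forall KU, In KU lk -> Defs.compact O (fst KU)) ->
  Defs.compact O (fun t => exists KU, In KU lk /\ fst KU t /\ Rl (snd KU)).
Proof.
  induction lk as [| KU0 lk IH]; intro H.
  - eapply compact_ext; [apply compact_empty |]. intro t; split; [tauto |].
    intros [KU [[] _]].
  - assert (IH' := IH (fun KU HKU => H KU (or_intror HKU))).
    destruct (classic (Rl (snd KU0))) as [HR | HR].
    + eapply compact_ext; [apply (compact_union _ _ _ (H KU0 (or_introl eq_refl)) IH') |].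
      intro t; split.
      * intros [Kt | [KU [HKU [Kt Rt]]]];
          [exists KU0; split; [left |]; auto | exists KU; split; [right |]; auto].
      * intros [KU [[<- | HKU] [Kt Rt]]]; [left; auto | right; exists KU; auto].
    + eapply compact_ext; [apply IH' |]. intro t; split.
      * intros [KU [HKU [Kt Rt]]]; exists KU; split; [right |]; auto.
      * intros [KU [[<- | HKU] [Kt Rt]]]; [contradiction | exists KU; auto].
Qed.

Lemma R_topology : is_topology R_open.
Proof.
  unfold R_open; repeat split.
  - intros x _. exists 1. split; auto; lra.
  - intros x [].
  - intros U V HU HV x [Ux Vx].
    destruct (HU x Ux) as [e1 [p1 H1]]. destruct (HV x Vx) as [e2 [p2 H2]].
    exists (Rmin e1 e2). split; [apply Rmin_glb_lt; auto |].
    intros y Hy. split; [apply H1 | apply H2]; eapply Rlt_le_trans; eauto;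
      [apply Rmin_l | apply Rmin_r].
  - intros F HF x [U [FU Ux]]. destruct (HF U FU x Ux) as [e [pe He]].
    exists e; split; auto. intros y Hy; exists U; auto.
Qed.

Lemma I_topology : is_topology I_top.
Proof. apply subspace_topology, R_topology. Qed.

Lemma I_bounds (t : I) : 0 <= proj1_sig t <= 1.
Proof. apply (proj2_sig t). Qed.

Lemma I_open_ball (V : I -> Prop) : I_top V -> forall t, V t ->
  exists e, 0 < e /\ forall t' : I, Rabs (proj1_sig t' - proj1_sig t) < e -> V t'.
Proof.
  intros [U [HU HUV]] t Vt. apply HUV in Vt. destruct (HU _ Vt) as [e [he H]].
  exists e; split; auto. intros t' Ht. apply HUV, H, Ht.
Qed.

Lemma I_open_of_balls (V : I -> Prop) :
  (forall t, V t -> exists e, 0 < e /\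
     forall t' : I, Rabs (proj1_sig t' - proj1_sig t) < e -> V t') -> I_top V.
Proof.
  intro H.
  exists (fun x => exists (t : I) e, 0 < e /\
    (forall t' : I, Rabs (proj1_sig t' - proj1_sig t) < e -> V t') /\
    Rabs (x - proj1_sig t) < e).
  split.
  - intros x [t [e [he [Ht Hx]]]]. exists (e - Rabs (x - proj1_sig t)). split; [lra |].
    intros y Hy. exists t, e. repeat split; auto.
    pose proof (Rabs_triang (y - x) (x - proj1_sig t)) as Tr.
    replace (y - x + (x - proj1_sig t)) with (y - proj1_sig t) in Tr by ring. lra.
  - intro t'. split.
    + intro Vt. destruct (H t' Vt) as [e [he He]]. exists t', e. repeat split; auto.
      unfold Rminus. rewrite Rplus_opp_r, Rabs_R0; auto.
    + intros [t [e [he [Ht Hx]]]]. apply Ht, Hx.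
Qed.

Lemma I_gt_open c : I_top (fun s : I => c < proj1_sig s).
Proof.
  apply I_open_of_balls. intros t Ht. exists (proj1_sig t - c). split; [lra |].
  intros t' H'. apply Rabs_def2 in H'. lra.
Qed.

Lemma I_lt_open c : I_top (fun s : I => proj1_sig s < c).
Proof.
  apply I_open_of_balls. intros t Ht. exists (c - proj1_sig t). split; [lra |].
  intros t' H'. apply Rabs_def2 in H'. lra.
Qed.

(** Clamping a real number into [0,1]; it is the identity on [0,1] and
    1-Lipschitz, which lets us work with functions on R instead of on I. *)
Definition clamp (x : R) : I.
Proof.
  refine (exist _ (Rmax 0 (Rmin 1 x)) _).
  split; [apply Rmax_l | apply Rmax_lub; [lra | apply Rmin_l]].
Defined.

Lemma clamp_in x : 0 <= x <= 1 -> proj1_sig (clamp x) = x.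
Proof. intros H. simpl. unfold Rmax, Rmin. repeat destruct Rle_dec; lra. Qed.

Lemma clamp_val (t : I) : clamp (proj1_sig t) = t.
Proof. apply sig_ext, clamp_in, I_bounds. Qed.

Lemma clamp0 : clamp 0 = i0.
Proof. apply sig_ext. rewrite clamp_in; simpl; lra. Qed.

Lemma clamp1 : clamp 1 = i1.
Proof. apply sig_ext. rewrite clamp_in; simpl; lra. Qed.

Lemma clamp_lipschitz x y : Rabs (proj1_sig (clamp x) - proj1_sig (clamp y)) <= Rabs (x - y).
Proof.
  simpl. unfold Rmax, Rmin.
  repeat destruct Rle_dec; unfold Rabs; repeat destruct Rcase_abs; lra.
Qed.

(** ** Pasting on [0,1]

   A map that is continuous
   within each of finitely many sets covering [0,1] is continuous. *)

Definition cont_within {Z} (OZ : topology Z) (S : R -> Prop) (h : R -> Z) (x : R) : Prop :=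
  forall V, OZ V -> V (h x) -> exists d, 0 < d /\
    forall y, 0 <= y <= 1 -> S y -> Rabs (y - x) < d -> V (h y).

Lemma continuous_of_cont_within {Z} (OZ : topology Z) (h : R -> Z) :
  (forall t : I, cont_within OZ (fun _ => True) h (proj1_sig t)) ->
  continuous I_top OZ (fun t => h (proj1_sig t)).
Proof.
  intros H V HV. apply I_open_of_balls. intros t Vt.
  destruct (H t V HV Vt) as [d [hd Hd]].
  exists d; split; auto. intros t' Ht'. apply Hd; auto. apply I_bounds.
Qed.

Lemma cont_within_of_continuous {Z} (OZ : topology Z) (g : I -> Z) :
  continuous I_top OZ g ->
  forall x, 0 <= x <= 1 -> cont_within OZ (fun _ => True) (fun y => g (clamp y)) x.
Proof.
  intros Hg x Hx V HV Vx. destruct (I_open_ball _ (Hg V HV) (clamp x) Vx) as [e [he He]].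
  exists e; split; auto. intros y Hy _ Hxy. apply He. rewrite !clamp_in; auto.
Qed.

Lemma cont_within_union {Z} (OZ : topology Z) S1 S2 h x :
  cont_within OZ S1 h x -> cont_within OZ S2 h x ->
  cont_within OZ (fun y => S1 y \/ S2 y) h x.
Proof.
  intros H1 H2 V HV Vx.
  destruct (H1 V HV Vx) as [d1 [p1 D1]]. destruct (H2 V HV Vx) as [d2 [p2 D2]].
  exists (Rmin d1 d2). split; [apply Rmin_glb_lt; auto |].
  intros y Hy [S | S] Hd.
  - apply D1; auto. eapply Rlt_le_trans; [exact Hd | apply Rmin_l].
  - apply D2; auto. eapply Rlt_le_trans; [exact Hd | apply Rmin_r].
Qed.

Lemma cont_within_sub {Z} (OZ : topology Z) (S S' : R -> Prop) h x :
  (forall y, 0 <= y <= 1 -> S y -> S' y) -> cont_within OZ S' h x -> cont_within OZ S h x.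
Proof.
  intros HS H V HV Vx. destruct (H V HV Vx) as [d [pd D]].
  exists d; split; [exact pd |]. intros y Hy Sy Hd. apply D; auto.
Qed.

(** Continuity within a set that stays away from x holds trivially; this is
    where closedness of the pasted sets enters. *)
Lemma cont_within_far {Z} (OZ : topology Z) (S : R -> Prop) h x :
  (exists e, 0 < e /\ forall y, Rabs (y - x) < e -> ~ S y) -> cont_within OZ S h x.
Proof.
  intros [e [pe He]] V HV Vx. exists e; split; auto.
  intros y _ Sy Hd. exfalso. eapply He; eauto.
Qed.

Lemma cont_within_finite_union {Z E} (OZ : topology Z) (l : list E) (S : E -> R -> Prop) h x :
  (forall e, In e l -> cont_within OZ (S e) h x) ->
  cont_within OZ (fun y => exists e, In e l /\ S e y) h x.
Proof.
  induction l as [| e0 l IH]; intro H.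
  - apply cont_within_far. exists 1. split; [lra |]. intros y _ [e [[] _]].
  - apply cont_within_sub with (fun y => S e0 y \/ exists e, In e l /\ S e y).
    + intros y _ [e [[<- | He] Se]]; [left; auto | right; eauto].
    + apply cont_within_union; [apply H; left; auto |].
      apply IH. intros; apply H; right; auto.
Qed.

(** ** Homotopies between loops related by specialisation *)

Definition specializes {Z} (OZ : topology Z) (y z : Z) : Prop :=
  forall V, OZ V -> V y -> V z.

Lemma prod_topology {S T} (OS : topology S) (OT : topology T) : is_topology (prod_top OS OT).
Proof. apply generated_topology. Qed.

Lemma prod_box {S T} (OS : topology S) (OT : topology T) U V :
  OS U -> OT V -> prod_top OS OT (fun z => U (fst z) /\ V (snd z)).
Proof. intros HU HV O HO HB. apply HB. exists U, V. repeat split; auto; tauto. Qed.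

Lemma fst_open (V : I -> Prop) : I_top V -> prod_top I_top I_top (fun z : I * I => V (fst z)).
Proof.
  intro H. eapply open_ext.
  - apply (prod_box I_top I_top V (fun _ => True)); auto. apply open_full, I_topology.
  - intro; simpl; tauto.
Qed.

Lemma snd_open (V : I -> Prop) : I_top V -> prod_top I_top I_top (fun z : I * I => V (snd z)).
Proof.
  intro H. eapply open_ext.
  - apply (prod_box I_top I_top (fun _ => True) V); auto. apply open_full, I_topology.
  - intro; simpl; tauto.
Qed.

Lemma I_eq0 (s : I) : proj1_sig s <= 0 -> s = i0.
Proof. intro H. apply sig_ext. simpl. pose proof (I_bounds s). lra. Qed.

(** If u specialises pointwise to w, a homotopy starting at w can be
    restarted at u: use u at time 0 and the old homotopy at later times. *)
Lemma homotopic_restart {Z} (OZ : topology Z) z (u w h : I -> Z) :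
  is_loop OZ z u -> (forall t, specializes OZ (u t) (w t)) ->
  homotopic_rel OZ z w h -> homotopic_rel OZ z u h.
Proof.
  intros [Hu [Hu0 Hu1]] Hs [H [HH [H0 [H1 [Hl Hr]]]]].
  exists (fun p => if Rle_dec (proj1_sig (snd p)) 0 then u (fst p) else H p).
  split; [| repeat split].
  - intros V HV. apply open_of_local; [apply prod_topology |]. intros [t s] Hv. simpl in Hv.
    destruct (Rle_dec (proj1_sig s) 0) as [Hs0 | Hs0].
    + exists (fun p => V (H p) /\ V (u (fst p))). split; [| split].
      * apply open_inter; [apply prod_topology | apply HH; auto |].
        apply (fst_open (fun x => V (u x))), Hu; auto.
      * simpl. rewrite (I_eq0 s Hs0), H0. split; auto. apply Hs; auto.
      * intros p [A1 A2]. cbv beta. destruct Rle_dec; auto.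
    + exists (fun p => V (H p) /\ 0 < proj1_sig (snd p)). split; [| split].
      * apply open_inter; [apply prod_topology | apply HH; auto |].
        apply (snd_open (fun s => 0 < proj1_sig s)), I_gt_open.
      * simpl. split; auto. lra.
      * intros p [A1 A2]. cbv beta. destruct Rle_dec; auto.
        exfalso; apply (Rlt_not_le _ _ A2 r).
  - intro s. simpl. destruct Rle_dec; auto. lra.
  - intro s. simpl. destruct Rle_dec; auto. lra.
  - intro t. simpl. destruct Rle_dec; auto.
  - intro t. simpl. destruct Rle_dec; auto.
Qed.

Definition delay (s : I) : I := clamp (2 * proj1_sig s - 1).

Lemma delay_continuous : continuous I_top I_top delay.
Proof.
  intros V HV. apply I_open_of_balls. intros t Vt.
  destruct (I_open_ball V HV (delay t) Vt) as [e [he He]].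
  exists (e / 2). split; [lra |]. intros t' Ht'. apply He. unfold delay.
  eapply Rle_lt_trans; [apply clamp_lipschitz |].
  replace (2 * proj1_sig t' - 1 - (2 * proj1_sig t - 1))
    with (2 * (proj1_sig t' - proj1_sig t)) by ring.
  rewrite Rabs_mult, (Rabs_right 2) by lra. lra.
Qed.

Lemma delay_time_continuous :
  continuous (prod_top I_top I_top) (prod_top I_top I_top) (fun p => (fst p, delay (snd p))).
Proof.
  apply continuous_into_generated; [apply prod_topology |]. intros W [U [V [HU [HV HW]]]].
  eapply open_ext.
  - apply (prod_box I_top I_top U (fun s => V (delay s))); auto. apply delay_continuous; auto.
  - intro x. rewrite HW. simpl. tauto.
Qed.

(** If u specialises pointwise to w, a homotopy starting at u can be made to
    start at w: stay at w on the first half of the time, then run the old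
    homotopy at double speed. *)
Lemma homotopic_advance {Z} (OZ : topology Z) z (u w h : I -> Z) :
  is_loop OZ z w -> (forall t, specializes OZ (u t) (w t)) ->
  homotopic_rel OZ z u h -> homotopic_rel OZ z w h.
Proof.
  intros [Hw [Hw0 Hw1]] Hs [H [HH [H0 [H1 [Hl Hr]]]]].
  set (D := fun p : I * I => (fst p, delay (snd p))).
  exists (fun p => if Rlt_dec (proj1_sig (snd p)) (1/2) then w (fst p) else H (D p)).
  split; [| repeat split].
  - intros V HV. apply open_of_local; [apply prod_topology |]. intros [t s] Hv. simpl in Hv.
    destruct (Rlt_dec (proj1_sig s) (1/2)) as [Hs0 | Hs0].
    + exists (fun p => V (w (fst p)) /\ proj1_sig (snd p) < 1/2). split; [| split].
      * apply open_inter; [apply prod_topology | apply (fst_open (fun x => V (w x))), Hw; auto |].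
        apply (snd_open (fun s => proj1_sig s < 1/2)), I_lt_open.
      * simpl. auto.
      * intros p [A1 A2]. cbv beta. destruct Rlt_dec; auto. lra.
    + exists (fun p => V (H (D p)) /\ (1/2 < proj1_sig (snd p) \/ V (w (fst p)))).
      split; [| split].
      * apply open_inter; [apply prod_topology | |].
        { apply (delay_time_continuous (fun p => V (H p))). apply HH; auto. }
        apply open_union; [apply prod_topology | |].
        { apply (snd_open (fun s => 1/2 < proj1_sig s)), I_gt_open. }
        apply (fst_open (fun x => V (w x))), Hw; auto.
      * simpl. split; auto. destruct (Rlt_dec (1/2) (proj1_sig s)); [left; auto | right].
        assert (Es : delay s = i0) by (unfold delay; rewrite <- clamp0; f_equal; lra).
        unfold D in Hv. simpl in Hv. rewrite Es, H0 in Hv. apply Hs; auto.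
      * intros p [A1 A2]. cbv beta. destruct Rlt_dec; auto.
        destruct A2 as [A2 | A2]; auto. exfalso; apply (Rlt_asym _ _ A2 r).
  - intro s. simpl. destruct Rlt_dec; auto. lra.
  - intro s. simpl. destruct Rlt_dec; [lra |]. unfold D, delay. simpl.
    replace (2 * 1 - 1) with 1 by ring. rewrite clamp1. auto.
  - intro t. simpl. destruct Rlt_dec; auto. unfold D; simpl; auto.
  - intro t. simpl. destruct Rlt_dec; auto. unfold D; simpl; auto.
Qed.

Lemma hclass_specializes {Z} (OZ : topology Z) z (u w : I -> Z) :
  is_loop OZ z u -> is_loop OZ z w -> (forall t, specializes OZ (u t) (w t)) ->
  hclass OZ z u = hclass OZ z w.
Proof.
  intros Hu Hw Hs. apply pred_ext. intro h. unfold hclass. split.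
  - intros [Hh Hom]. split; auto. eapply homotopic_advance; eauto.
  - intros [Hh Hom]. split; auto. eapply homotopic_restart; eauto.
Qed.

(** ** The quotient X/A *)

Section Quotient.
Variables (X : Type) (OX : topology X) (HX : is_topology OX) (A : X -> Prop) (HA : OX A).
Variables (a : X) (Ha : A a).

Local Notation Y := (QT A).
Local Notation OY := (quot_top OX A).
Local Notation star := (qmap A a).

Lemma qmap_A x : A x -> qmap A x = star.
Proof.
  intro Hx. apply sig_ext, pred_ext. intro z. unfold qrel. simpl.
  split; intros [<- | [_ Hz]]; right; auto.
Qed.

Lemma A_of_qmap_star x : qmap A x = star -> A x.
Proof.
  intro H. apply (f_equal (@proj1_sig _ _)) in H. simpl in H.
  assert (E : qrel A x a) by (rewrite H; left; auto).
  destruct E as [<- | [Hx _]]; auto.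
Qed.

Lemma qmap_inj x y : ~ A x -> qmap A x = qmap A y -> x = y.
Proof.
  intros Hx H. apply (f_equal (@proj1_sig _ _)) in H. simpl in H.
  assert (E : qrel A y x) by (rewrite <- H; left; auto).
  destruct E as [<- | [_ Hx']]; auto. contradiction.
Qed.

Definition rep (q : Y) : X :=
  proj1_sig (constructive_indefinite_description _ (proj2_sig q)).

Lemma qmap_rep q : qmap A (rep q) = q.
Proof.
  apply sig_ext. unfold rep. destruct (constructive_indefinite_description _ _) as [x Hx].
  simpl. symmetry; exact Hx.
Qed.

Lemma rep_qmap x : ~ A x -> rep (qmap A x) = x.
Proof. intro Hx. symmetry. apply qmap_inj; auto. symmetry. apply qmap_rep. Qed.

Lemma rep_star_A : A (rep star).
Proof. apply A_of_qmap_star, qmap_rep. Qed.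

Lemma star_open : OY (fun q => q = star).
Proof.
  unfold quot_top. eapply open_ext; [exact HA |].
  intro x. split; [apply qmap_A | apply A_of_qmap_star].
Qed.

Lemma closure_specializes_star x : closure OX A x -> specializes OY (qmap A x) star.
Proof.
  intros Hx V HV Vx. destruct (Hx _ HV Vx) as [y [Ay Vy]]. rewrite <- (qmap_A y Ay); auto.
Qed.

Definition pcl (q : Y) : Prop := closure OX A (rep q).

Lemma pcl_specializes_star q : pcl q -> specializes OY q star.
Proof. intro H. rewrite <- (qmap_rep q). apply closure_specializes_star; auto. Qed.

Lemma pcl_star : pcl star.
Proof. apply subset_closure, rep_star_A. Qed.

Lemma pcl_compl_open : OY (fun q => ~ pcl q).
Proof.
  unfold quot_top, pcl.
  apply open_ext with (fun x => ~ closure OX A x); [apply closure_compl_open; auto |].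
  intro x. destruct (classic (A x)) as [Hx | Hx].
  - rewrite (qmap_A x Hx).
    split; intros H; exfalso; apply H; apply subset_closure; auto; apply rep_star_A.
  - rewrite rep_qmap; tauto.
Qed.

Lemma image_star_open V : OX V -> OY (fun q => q = star \/ V (rep q)).
Proof.
  intro HV. unfold quot_top. apply open_ext with (fun x => A x \/ V x).
  - apply open_union; auto.
  - intro x. destruct (classic (A x)) as [Hx | Hx].
    + split; intros _; left; auto. apply qmap_A; auto.
    + rewrite rep_qmap; auto. split; intros [H | H]; auto; [contradiction |].
      apply A_of_qmap_star in H. contradiction.
Qed.

End Quotient.

Definition rel_closed (Z : R -> Prop) : Prop :=
  forall x, 0 <= x <= 1 -> ~ Z x ->
    exists e, 0 < e /\ forall y, Rabs (y - x) < e -> 0 <= y <= 1 -> ~ Z y.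

(** The last point of a relatively closed set containing 0 before a point q
    outside of it (its supremum below q). *)
Lemma last_point_before (Z : R -> Prop) q : rel_closed Z -> Z 0 ->
  0 <= q <= 1 -> ~ Z q -> exists al, 0 <= al < q /\ Z al /\ forall y, al < y <= q -> ~ Z y.
Proof.
  intros Hc Z0 Hq Zq.
  set (E := fun y => 0 <= y <= q /\ Z y).
  assert (HB : bound E) by (exists q; intros y [Hy _]; lra).
  assert (HE : exists y, E y) by (exists 0; split; [lra | auto]).
  destruct (completeness E HB HE) as [m [Hub Hlub]].
  assert (m0 : 0 <= m) by (apply Hub; split; [lra | auto]).
  assert (mq : m <= q) by (apply Hlub; intros y [Hy _]; lra).
  assert (Zm : Z m).
  { apply NNPP; intro Hn. destruct (Hc m ltac:(lra) Hn) as [e [he He]].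
    assert (m <= m - e/2); [| lra].
    apply Hlub. intros y [Hy Zy].
    destruct (Rle_dec y (m - e/2)) as [| Hn']; auto. exfalso.
    assert (y <= m) by (apply Hub; split; auto).
    apply (He y); auto; [apply Rabs_def1 |]; lra. }
  exists m. split; [split; auto; destruct (Req_dec m q) as [-> |]; [contradiction | lra] |].
  split; auto. intros y Hy Zy. assert (y <= m) by (apply Hub; split; [lra | auto]). lra.
Qed.

(** The mirror statement, by the symmetry y |-> 1 - y. *)
Lemma first_point_after (Z : R -> Prop) q : rel_closed Z -> Z 1 ->
  0 <= q <= 1 -> ~ Z q -> exists be, q < be <= 1 /\ Z be /\ forall y, q <= y < be -> ~ Z y.
Proof.
  intros Hc Z1 Hq Zq.
  destruct (last_point_before (fun y => Z (1 - y)) (1 - q)) as [al [H1 [H2 H3]]].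
  - intros x Hx Hn. destruct (Hc (1 - x)) as [e [he He]]; [lra | auto |].
    exists e; split; auto. intros y Hy Hy1. apply He; [| lra].
    replace (1 - y - (1 - x)) with (- (y - x)) by ring. rewrite Rabs_Ropp; auto.
  - replace (1 - 0) with 1 by ring; auto.
  - lra.
  - replace (1 - (1 - q)) with q by ring; auto.
  - exists (1 - al). split; [lra |]. split; auto.
    intros y Hy. replace y with (1 - (1 - y)) by ring. apply H3. lra.
Qed.

Fixpoint max_below (t : R) (l : list R) : R :=
  match l with
  | nil => 0
  | e :: l' => if Rle_dec e t then Rmax e (max_below t l') else max_below t l'
  end.

Fixpoint min_above (t : R) (l : list R) : R :=
  match l with
  | nil => 1
  | e :: l' => if Rle_dec t e then Rmin e (min_above t l') else min_above t l'
  end.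

Lemma max_below_le t l : 0 <= t -> max_below t l <= t.
Proof. intro Ht. induction l; simpl; auto. destruct Rle_dec; auto. apply Rmax_lub; auto. Qed.

Lemma max_below_ge0 t l : 0 <= max_below t l.
Proof.
  induction l; simpl; [lra |]. destruct Rle_dec; auto.
  eapply Rle_trans; [exact IHl | apply Rmax_r].
Qed.

Lemma max_below_ge t l e : In e l -> e <= t -> e <= max_below t l.
Proof.
  induction l as [| e' l IH]; simpl; [tauto |]. intros [<- | He] Het.
  - destruct Rle_dec; [apply Rmax_l | contradiction].
  - destruct Rle_dec; auto. eapply Rle_trans; [apply IH; auto | apply Rmax_r].
Qed.

Lemma max_below_in t l : max_below t l = 0 \/ In (max_below t l) l.
Proof.
  induction l as [| e l IH]; simpl; auto. destruct Rle_dec.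
  - unfold Rmax. destruct Rle_dec; [destruct IH; auto | auto].
  - destruct IH; auto.
Qed.

Lemma min_above_ge t l : t <= 1 -> t <= min_above t l.
Proof. intro Ht. induction l; simpl; auto. destruct Rle_dec; auto. apply Rmin_glb; auto. Qed.

Lemma min_above_le1 t l : min_above t l <= 1.
Proof.
  induction l; simpl; [lra |]. destruct Rle_dec; auto.
  eapply Rle_trans; [apply Rmin_r | exact IHl].
Qed.

Lemma min_above_le t l e : In e l -> t <= e -> min_above t l <= e.
Proof.
  induction l as [| e' l IH]; simpl; [tauto |]. intros [<- | He] Het.
  - destruct Rle_dec; [apply Rmin_l | contradiction].
  - destruct Rle_dec; auto. eapply Rle_trans; [apply Rmin_r | apply IH; auto].
Qed.

Lemma min_above_in t l : min_above t l = 1 \/ In (min_above t l) l.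
Proof.
  induction l as [| e l IH]; simpl; auto. destruct Rle_dec.
  - unfold Rmin. destruct Rle_dec; [auto | destruct IH; auto].
  - destruct IH; auto.
Qed.

Lemma intervals_compl_open (l : list (R * R)) x :
  ~ (exists p, In p l /\ fst p <= x <= snd p) ->
  exists e, 0 < e /\ forall y, Rabs (y - x) < e -> ~ (exists p, In p l /\ fst p <= y <= snd p).
Proof.
  induction l as [| p l IH]; intro H.
  - exists 1. split; [lra |]. intros y _ [p [[] _]].
  - destruct IH as [e2 [he2 He2]].
    { intros [p' [Hp' Hx]]. apply H. exists p'; split; auto. right; auto. }
    assert (Hx : ~ (fst p <= x <= snd p)) by (intro; apply H; exists p; split; auto; left; auto).
    set (e1 := if Rlt_dec x (fst p) then fst p - x else x - snd p).
    assert (he1 : 0 < e1) by (unfold e1; destruct Rlt_dec; lra).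
    exists (Rmin e1 e2). split; [apply Rmin_glb_lt; auto |].
    intros y Hy [p' [[<- | Hp'] Hyp]].
    + assert (Hy1 : Rabs (y - x) < e1) by (eapply Rlt_le_trans; [exact Hy | apply Rmin_l]).
      apply Rabs_def2 in Hy1. unfold e1 in Hy1. destruct Rlt_dec; lra.
    + apply (He2 y); [eapply Rlt_le_trans; [exact Hy | apply Rmin_r] |]. exists p'; auto.
Qed.

(** ** The construction *)

Section Construction.
Variables (X : Type) (OX : topology X) (HX : is_topology OX) (A : X -> Prop) (HA : OX A).
Variables (a : X) (Ha : A a).
Hypothesis Hpc : path_connected OX (closure OX A).
Variable g : I -> QT A.
Hypothesis Hg : is_loop (quot_top OX A) (qmap A a) g.

Local Notation OY := (quot_top OX A).
Local Notation star := (qmap A a).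
Local Notation rep := (rep X A).
Local Notation pcl := (pcl X OX A).

Definition gr (x : R) : QT A := g (clamp x).

Lemma gr_cont x : 0 <= x <= 1 -> cont_within OY (fun _ => True) gr x.
Proof. apply cont_within_of_continuous, Hg. Qed.

Lemma gr0 : gr 0 = star.
Proof. unfold gr. rewrite clamp0. apply Hg. Qed.

Lemma gr1 : gr 1 = star.
Proof. unfold gr. rewrite clamp1. apply Hg. Qed.

Lemma gr_val t : gr (proj1_sig t) = g t.
Proof. unfold gr. rewrite clamp_val. auto. Qed.

Lemma pcl_gr_closed : rel_closed (fun y => pcl (gr y)).
Proof.
  intros x Hx Hn.
  destruct (gr_cont x Hx _ (pcl_compl_open X OX HX A a Ha) Hn) as [d [hd Hd]].
  exists d; split; [exact hd |]. intros y Hy Hy1. apply Hd; auto.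
Qed.

Lemma pcl_near_star x : 0 <= x <= 1 -> gr x = star ->
  exists e, 0 < e /\ forall y, 0 <= y <= 1 -> Rabs (y - x) < e -> pcl (gr y).
Proof.
  intros Hx E.
  destruct (gr_cont x Hx _ (star_open X OX A HA a Ha) E) as [d [hd Hd]].
  exists d; split; [exact hd |]. intros y Hy Hdy.
  rewrite (Hd y Hy Logic.I Hdy). apply pcl_star; auto.
Qed.

Definition piece (p : R * R) : Prop :=
  0 < fst p /\ fst p < snd p /\ snd p < 1 /\
  (forall x, fst p <= x <= snd p -> gr x <> star) /\
  pcl (gr (fst p)) /\ pcl (gr (snd p)).

(** Every point mapped outside p(cl A) lies inside a piece: take the closest
    points of the preimage of p(cl A) on both sides. *)
Lemma piece_exists q : 0 <= q <= 1 -> ~ pcl (gr q) -> exists p, piece p /\ fst p < q < snd p.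
Proof.
  intros Hq Nq.
  assert (Z0 : pcl (gr 0)) by (rewrite gr0; apply pcl_star; auto).
  assert (Z1 : pcl (gr 1)) by (rewrite gr1; apply pcl_star; auto).
  destruct (last_point_before _ q pcl_gr_closed Z0 Hq Nq) as [al [Hal [Zal Hal2]]].
  destruct (first_point_after _ q pcl_gr_closed Z1 Hq Nq) as [be [Hbe [Zbe Hbe2]]].
  assert (Nal : gr al <> star).
  { intro E. destruct (pcl_near_star al) as [e [he He]]; [lra | auto |].
    set (y := Rmin (al + e/2) q).
    assert (al < y) by (apply Rmin_glb_lt; lra).
    assert (y <= q) by apply Rmin_r. assert (y <= al + e/2) by apply Rmin_l.
    apply (Hal2 y); [lra |]. apply He; [lra | apply Rabs_def1; lra]. }
  assert (Nbe : gr be <> star).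
  { intro E. destruct (pcl_near_star be) as [e [he He]]; [lra | auto |].
    set (y := Rmax (be - e/2) q).
    assert (y < be) by (apply Rmax_lub_lt; lra).
    assert (q <= y) by apply Rmax_r. assert (be - e/2 <= y) by apply Rmax_l.
    apply (Hbe2 y); [lra |]. apply He; [lra | apply Rabs_def1; lra]. }
  exists (al, be). unfold piece; simpl. split; [| lra].
  split; [| split; [lra | split; [| split; [| split]]]]; auto.
  - destruct (Req_dec al 0) as [E | E]; [| lra]. rewrite E, gr0 in Nal. contradiction.
  - destruct (Req_dec be 1) as [E | E]; [| lra]. rewrite E, gr1 in Nbe. contradiction.
  - intros x Hx E.
    destruct (Req_dec x al) as [-> | E1]; [contradiction |].
    destruct (Req_dec x be) as [-> | E2]; [contradiction |].
    destruct (Rle_dec x q).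
    + apply (Hal2 x); [lra |]. rewrite E. apply pcl_star; auto.
    + apply (Hbe2 x); [lra |]. rewrite E. apply pcl_star; auto.
Qed.

Section Pieces.
Variable lp : list (R * R).
Hypothesis Hlp : forall p, In p lp -> piece p.

Definition covered (y : R) : Prop := exists p, In p lp /\ fst p <= y <= snd p.
Definition ends : list R := flat_map (fun p : R * R => fst p :: snd p :: nil) lp.

Lemma covered_props y : covered y -> 0 < y < 1 /\ gr y <> star.
Proof.
  intros [p [Hp Hy]]. destruct (Hlp p Hp) as [h1 [h2 [h3 [h4 _]]]].
  split; [lra |]. apply h4; auto.
Qed.

Lemma end_props e : In e ends -> covered e /\ gr e <> star /\ pcl (gr e).
Proof.
  intro He. apply in_flat_map in He. destruct He as [p [Hp He]].
  destruct (Hlp p Hp) as [h1 [h2 [h3 [h4 [h5 h6]]]]].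
  assert (Pe : covered e) by (exists p; split; auto; destruct He as [<- | [<- | []]]; lra).
  split; [auto | split; [apply covered_props; auto |]].
  destruct He as [<- | [<- | []]]; auto.
Qed.

(** The gap around an uncovered point y is [gap_left y, gap_right y]: the
    nearest ends of pieces (or 0, 1) on either side. *)
Definition gap_left (y : R) : R := max_below y ends.
Definition gap_right (y : R) : R := min_above y ends.

Lemma gap_left_bounds y : 0 <= y <= 1 -> 0 <= gap_left y <= y.
Proof. intro. unfold gap_left. split; [apply max_below_ge0 | apply max_below_le; lra]. Qed.

Lemma gap_right_bounds y : 0 <= y <= 1 -> y <= gap_right y <= 1.
Proof. intro. unfold gap_right. split; [apply min_above_ge; lra | apply min_above_le1]. Qed.

Lemma gap_left_in y : gap_left y = 0 \/ In (gap_left y) ends.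
Proof. apply max_below_in. Qed.

Lemma gap_right_in y : gap_right y = 1 \/ In (gap_right y) ends.
Proof. apply min_above_in. Qed.

Lemma no_end_in_gap y e : 0 <= y <= 1 -> In e ends -> ~ (gap_left y < e < gap_right y).
Proof.
  intros Hy He. unfold gap_left, gap_right. destruct (Rle_dec e y).
  - pose proof (max_below_ge y ends e He r). lra.
  - pose proof (min_above_le y ends e He ltac:(lra)). lra.
Qed.

Lemma gap_nondegenerate y : 0 <= y <= 1 -> ~ covered y -> gap_left y < gap_right y.
Proof.
  intros Hy NP. pose proof (gap_left_bounds y Hy). pose proof (gap_right_bounds y Hy).
  destruct (Rlt_dec (gap_left y) (gap_right y)) as [| Hn]; auto. exfalso.
  assert (E1 : gap_left y = y) by lra. assert (E2 : gap_right y = y) by lra.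
  destruct (gap_left_in y) as [E | E].
  - destruct (gap_right_in y) as [F | F]; [lra |].
    apply end_props in F. destruct F as [F _]. apply covered_props in F. lra.
  - apply end_props in E. rewrite E1 in E. tauto.
Qed.

Lemma gap_covered_ends y0 y : 0 <= y0 <= 1 -> ~ covered y0 ->
  gap_left y0 <= y <= gap_right y0 -> covered y -> y = gap_left y0 \/ y = gap_right y0.
Proof.
  intros Hy0 NP Hy [p [Hp Hpy]].
  assert (Ha1 : In (fst p) ends) by (apply in_flat_map; exists p; split; [auto | left; auto]).
  assert (Hb1 : In (snd p) ends)
    by (apply in_flat_map; exists p; split; [auto | right; left; auto]).
  pose proof (no_end_in_gap y0 _ Hy0 Ha1) as N1. pose proof (no_end_in_gap y0 _ Hy0 Hb1) as N2.
  pose proof (gap_left_bounds y0 Hy0). pose proof (gap_right_bounds y0 Hy0).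
  destruct (Req_dec y (gap_left y0)); auto. destruct (Req_dec y (gap_right y0)); auto.
  exfalso. apply NP. exists p. split; auto.
  assert (fst p <= gap_left y0)
    by (destruct (Rle_dec (fst p) (gap_left y0)); auto; exfalso; apply N1; lra).
  assert (gap_right y0 <= snd p)
    by (destruct (Rle_dec (gap_right y0) (snd p)); auto; exfalso; apply N2; lra).
  lra.
Qed.

Lemma gap_same y0 y : 0 <= y0 <= 1 -> ~ covered y0 ->
  gap_left y0 <= y <= gap_right y0 -> ~ covered y ->
  gap_left y = gap_left y0 /\ gap_right y = gap_right y0.
Proof.
  intros Hy0 NP Hy NPy.
  pose proof (gap_left_bounds y0 Hy0). pose proof (gap_right_bounds y0 Hy0).
  assert (Hy1 : 0 <= y <= 1) by lra.
  pose proof (gap_left_bounds y Hy1). pose proof (gap_right_bounds y Hy1).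
  split.
  - assert (gap_left y0 <= gap_left y).
    { destruct (gap_left_in y0) as [E | E]; [lra |].
      apply (max_below_ge y ends (gap_left y0) E); lra. }
    destruct (gap_left_in y) as [E | E]; [lra |].
    pose proof (no_end_in_gap y0 _ Hy0 E) as N.
    destruct (Rle_dec (gap_left y) (gap_left y0)); [lra |]. exfalso.
    assert (gap_left y = gap_right y0)
      by (destruct (Rlt_dec (gap_left y) (gap_right y0)); [exfalso; apply N; lra | lra]).
    apply NPy. replace y with (gap_left y) by lra. apply end_props; auto.
  - assert (gap_right y <= gap_right y0).
    { destruct (gap_right_in y0) as [E | E]; [lra |].
      apply (min_above_le y ends (gap_right y0) E); lra. }
    destruct (gap_right_in y) as [E | E]; [lra |].
    pose proof (no_end_in_gap y0 _ Hy0 E) as N.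
    destruct (Rle_dec (gap_right y0) (gap_right y)); [lra |]. exfalso.
    assert (gap_right y = gap_left y0)
      by (destruct (Rlt_dec (gap_left y0) (gap_right y)); [exfalso; apply N; lra | lra]).
    apply NPy. replace y with (gap_right y) by lra. apply end_props; auto.
Qed.

Definition end_lift (x : R) : X :=
  if excluded_middle_informative (gr x = star) then a else rep (gr x).

Lemma end_lift_closure x : x = 0 \/ x = 1 \/ In x ends -> closure OX A (end_lift x).
Proof.
  intros H. unfold end_lift. destruct excluded_middle_informative as [E | E];
    [apply subset_closure; auto |].
  destruct H as [-> | [-> | H]]; [rewrite gr0 in E; tauto | rewrite gr1 in E; tauto |].
  apply end_props in H. apply H.
Qed.

Lemma end_lift_left y : closure OX A (end_lift (gap_left y)).
Proof. apply end_lift_closure. destruct (gap_left_in y); auto. Qed.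

Lemma end_lift_right y : closure OX A (end_lift (gap_right y)).
Proof. apply end_lift_closure. destruct (gap_right_in y); auto. Qed.

Definition bridge (x y : X) : I -> X :=
  match excluded_middle_informative (closure OX A x /\ closure OX A y) with
  | left H => proj1_sig (constructive_indefinite_description _ (Hpc x y (proj1 H) (proj2 H)))
  | right _ => fun _ => x
  end.

Lemma bridge_spec x y : closure OX A x -> closure OX A y ->
  continuous I_top OX (bridge x y) /\ bridge x y i0 = x /\ bridge x y i1 = y /\
  forall t, closure OX A (bridge x y t).
Proof.
  intros Hx Hy. unfold bridge. destruct excluded_middle_informative as [H | H]; [| tauto].
  destruct constructive_indefinite_description as [p Hp]. simpl. tauto.
Qed.

Definition rescale (u v y : R) : I := clamp ((y - u) / (v - u)).

Definition lift (y : R) : X :=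
  if excluded_middle_informative (covered y) then rep (gr y)
  else bridge (end_lift (gap_left y)) (end_lift (gap_right y))
              (rescale (gap_left y) (gap_right y) y).

Lemma lift_on_gap y0 y : 0 <= y0 <= 1 -> ~ covered y0 -> gap_left y0 <= y <= gap_right y0 ->
  lift y = bridge (end_lift (gap_left y0)) (end_lift (gap_right y0))
                  (rescale (gap_left y0) (gap_right y0) y).
Proof.
  intros Hy0 NP Hy. pose proof (gap_nondegenerate y0 Hy0 NP) as Hlt.
  destruct (bridge_spec _ _ (end_lift_left y0) (end_lift_right y0)) as [_ [P0 [P1 _]]].
  unfold lift. destruct excluded_middle_informative as [Py | NPy].
  - destruct (covered_props y Py) as [_ Ny].
    assert (Ey : rep (gr y) = end_lift y)
      by (unfold end_lift; destruct excluded_middle_informative; tauto).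
    destruct (gap_covered_ends y0 y Hy0 NP Hy Py) as [E | E]; unfold rescale; rewrite E.
    + replace ((gap_left y0 - gap_left y0) / (gap_right y0 - gap_left y0)) with 0
        by (field; lra).
      rewrite clamp0, P0, <- E. auto.
    + replace ((gap_right y0 - gap_left y0) / (gap_right y0 - gap_left y0)) with 1
        by (field; lra).
      rewrite clamp1, P1, <- E. auto.
  - destruct (gap_same y0 y Hy0 NP Hy NPy) as [E1 E2]. rewrite E1, E2. auto.
Qed.

Lemma lift_cont_covered x : 0 <= x <= 1 -> cont_within OX covered lift x.
Proof.
  intro Hx. destruct (classic (covered x)) as [Px | NPx].
  - intros V HV Vx. unfold lift in Vx.
    destruct excluded_middle_informative as [_ | Pxx]; [| contradiction].
    destruct (gr_cont x Hx _ (image_star_open X OX HX A HA a Ha V HV) (or_intror Vx))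
      as [d [hd Hd]].
    exists d. split; [exact hd |]. intros y Hy Py Hdy.
    destruct (Hd y Hy Logic.I Hdy) as [E | E].
    + exfalso. apply (covered_props y Py). auto.
    + unfold lift. destruct excluded_middle_informative; [auto | contradiction].
  - apply cont_within_far, intervals_compl_open; auto.
Qed.

Definition in_gap (uv : R * R) (y : R) : Prop :=
  fst uv <= y <= snd uv /\ exists y0, 0 <= y0 <= 1 /\ ~ covered y0 /\
    gap_left y0 = fst uv /\ gap_right y0 = snd uv.

Lemma lift_cont_gap uv x : cont_within OX (in_gap uv) lift x.
Proof.
  destruct uv as [u v].
  destruct (classic (exists y0, 0 <= y0 <= 1 /\ ~ covered y0 /\
                                gap_left y0 = u /\ gap_right y0 = v))
    as [[y0 [Hy0 [NP [Eu Ev]]]] | Hn];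
    [| apply cont_within_far; exists 1; split; [lra |]; intros y _ [_ Hex]; tauto].
  subst u v. set (l := gap_left y0). set (r := gap_right y0).
  assert (Hlt : l < r) by apply (gap_nondegenerate y0 Hy0 NP).
  destruct (bridge_spec _ _ (end_lift_left y0) (end_lift_right y0)) as [Pc _].
  destruct (classic (l <= x <= r)) as [Hin | Hout].
  - intros V HV Vx. rewrite (lift_on_gap y0 x) in Vx by auto. fold l r in Vx.
    destruct (I_open_ball _ (Pc V HV) _ Vx) as [e [he He]].
    exists (e * (r - l)). split; [apply Rmult_lt_0_compat; lra |].
    intros y Hy [Hyin _] Hdy. simpl in Hyin. rewrite (lift_on_gap y0 y) by auto. fold l r.
    apply He. unfold rescale. eapply Rle_lt_trans; [apply clamp_lipschitz |].
    replace ((y - l) / (r - l) - (x - l) / (r - l)) with ((y - x) * / (r - l)) by (field; lra).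
    rewrite Rabs_mult, (Rabs_right (/ (r - l))) by (left; apply Rinv_0_lt_compat; lra).
    apply (Rmult_lt_reg_r (r - l)); [lra |].
    rewrite Rmult_assoc, Rinv_l by lra. lra.
  - apply cont_within_far. exists (if Rlt_dec x l then l - x else x - r).
    split; [destruct Rlt_dec; lra |]. intros y Hy [Hyin _]. simpl in Hyin.
    apply Rabs_def2 in Hy. destruct Rlt_dec; lra.
Qed.

(** f is continuous: [0,1] is covered by the pieces and finitely many gaps,
    all of them closed. *)
Lemma lift_continuous : continuous I_top OX (fun t => lift (proj1_sig t)).
Proof.
  apply continuous_of_cont_within. intro t. pose proof (I_bounds t) as Ht.
  apply cont_within_sub with (fun y => covered y \/
    exists uv, In uv (list_prod (0 :: ends) (1 :: ends)) /\ in_gap uv y).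
  - intros y Hy _. destruct (classic (covered y)) as [Py | NPy]; [left; auto | right].
    exists (gap_left y, gap_right y). split.
    + apply in_prod;
        [destruct (gap_left_in y) as [E | E]; [rewrite E; left | right]
        |destruct (gap_right_in y) as [E | E]; [rewrite E; left | right]]; auto.
    + split; simpl; [split; [apply gap_left_bounds | apply gap_right_bounds]; auto |].
      exists y. auto.
  - apply cont_within_union; [apply lift_cont_covered; auto |].
    apply cont_within_finite_union. intros uv _. apply lift_cont_gap.
Qed.

Definition trimmed (y : R) : QT A :=
  if excluded_middle_informative (covered y) then gr y else star.

Lemma trimmed_cont_covered x : 0 <= x <= 1 -> cont_within OY covered trimmed x.
Proof.
  intro Hx. destruct (classic (covered x)) as [Px | NPx].
  - intros V HV Vx. unfold trimmed in Vx.
    destruct excluded_middle_informative as [_ | Pxx]; [| contradiction].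
    destruct (gr_cont x Hx V HV Vx) as [d [hd Hd]]. exists d. split; [exact hd |].
    intros y Hy Py Hdy. unfold trimmed.
    destruct excluded_middle_informative; [apply Hd; auto | contradiction].
  - apply cont_within_far, intervals_compl_open; auto.
Qed.

(** Near a covered point x with g'(x) in an open set V not containing *, all
    points are covered: x cannot be an end of its piece, since the ends are
    mapped into p(cl A). *)
Lemma trimmed_cont_uncovered x : cont_within OY (fun y => ~ covered y) trimmed x.
Proof.
  intros V HV Vx.
  destruct (classic (V star)) as [Vs | Vs].
  { exists 1. split; [lra |]. intros y _ NPy _. unfold trimmed.
    destruct excluded_middle_informative; [contradiction | auto]. }
  unfold trimmed in Vx. destruct excluded_middle_informative as [Px | _]; [| contradiction].
  destruct Px as [p [Hp Hxp]]. destruct (Hlp p Hp) as [_ [_ [_ [_ [Hl Hr]]]]].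
  assert (Nl : x <> fst p).
  { intros ->. apply Vs, (pcl_specializes_star X OX A a Ha _ Hl); auto. }
  assert (Nr : x <> snd p).
  { intros ->. apply Vs, (pcl_specializes_star X OX A a Ha _ Hr); auto. }
  exists (Rmin (x - fst p) (snd p - x)). split; [apply Rmin_glb_lt; lra |].
  intros y _ NPy Hdy. exfalso. apply NPy. exists p. split; auto.
  pose proof (Rmin_l (x - fst p) (snd p - x)). pose proof (Rmin_r (x - fst p) (snd p - x)).
  apply Rabs_def2 in Hdy. lra.
Qed.

Lemma trimmed_continuous : continuous I_top OY (fun t => trimmed (proj1_sig t)).
Proof.
  apply continuous_of_cont_within. intro t.
  apply cont_within_sub with (fun y => covered y \/ ~ covered y).
  - intros y _ _. apply classic.
  - apply cont_within_union; [apply trimmed_cont_covered, I_bounds |].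
    apply trimmed_cont_uncovered.
Qed.

(** At an uncovered end of [0,1] the gap starts (resp. ends) there, and f
    starts (resp. ends) at the bridge end point end_lift 0 = a (resp.
    end_lift 1 = a). *)
Lemma lift0 : lift 0 = a.
Proof.
  assert (H01 : 0 <= 0 <= 1) by lra.
  assert (NP : ~ covered 0) by (intro H; apply covered_props in H; lra).
  pose proof (gap_left_bounds 0 H01). pose proof (gap_nondegenerate 0 H01 NP).
  assert (E : gap_left 0 = 0) by lra.
  rewrite (lift_on_gap 0 0) by (auto; lra).
  destruct (bridge_spec _ _ (end_lift_left 0) (end_lift_right 0)) as [_ [P0 _]].
  unfold rescale. rewrite E.
  replace ((0 - 0) / (gap_right 0 - 0)) with 0 by (field; lra).
  rewrite clamp0. rewrite <- E at 1. rewrite P0, E.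
  unfold end_lift. destruct excluded_middle_informative as [_ | N]; auto.
  rewrite gr0 in N; tauto.
Qed.

Lemma lift1 : lift 1 = a.
Proof.
  assert (H01 : 0 <= 1 <= 1) by lra.
  assert (NP : ~ covered 1) by (intro H; apply covered_props in H; lra).
  pose proof (gap_right_bounds 1 H01). pose proof (gap_nondegenerate 1 H01 NP).
  assert (E : gap_right 1 = 1) by lra.
  rewrite (lift_on_gap 1 1) by (auto; lra).
  destruct (bridge_spec _ _ (end_lift_left 1) (end_lift_right 1)) as [_ [_ [P1 _]]].
  unfold rescale. rewrite E.
  replace ((1 - gap_left 1) / (1 - gap_left 1)) with 1 by (field; lra).
  rewrite clamp1. rewrite <- E at 2. rewrite P1, E.
  unfold end_lift. destruct excluded_middle_informative as [_ | N]; auto.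
  rewrite gr1 in N; tauto.
Qed.

(** p o f specialises pointwise to g': both agree on the pieces, and on the
    gaps f runs in cl A while g' is *. *)
Lemma lift_specializes y : specializes OY (qmap A (lift y)) (trimmed y).
Proof.
  unfold lift, trimmed. destruct excluded_middle_informative as [Py | NPy].
  - rewrite qmap_rep. intros V _ H; exact H.
  - apply closure_specializes_star; auto.
    apply (bridge_spec _ _ (end_lift_left y) (end_lift_right y)).
Qed.

Lemma trim_and_lift : exists (f : I -> X) (g' : I -> QT A),
  is_loop OX a f /\ is_loop OY star g' /\ (forall t, specializes OY (qmap A (f t)) (g' t)) /\
  (forall t, covered (proj1_sig t) -> g' t = g t) /\
  (forall t, ~ covered (proj1_sig t) -> g' t = star).
Proof.
  exists (fun t => lift (proj1_sig t)), (fun t => trimmed (proj1_sig t)).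
  split; [| split; [| split; [| split]]].
  - split; [apply lift_continuous |]. simpl. rewrite lift0, lift1. auto.
  - split; [apply trimmed_continuous |]. simpl. unfold trimmed.
    split; destruct excluded_middle_informative as [H | _]; auto;
      apply covered_props in H; lra.
  - intro t. apply lift_specializes.
  - intros t Pt. unfold trimmed. destruct excluded_middle_informative; [| contradiction].
    apply gr_val.
  - intros t NPt. unfold trimmed. destruct excluded_middle_informative; [contradiction | auto].
Qed.

End Pieces.

Lemma pieces_cover (Q : I -> Prop) : Defs.compact I_top Q -> (forall t, Q t -> ~ pcl (g t)) ->
  exists lp, (forall p, In p lp -> piece p) /\ forall t, Q t -> covered lp (proj1_sig t).
Proof.
  intros HQc HQ.
  set (F := fun U : I -> Prop => exists p, piece p /\
              forall t, U t <-> fst p < proj1_sig t < snd p).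
  destruct (HQc F) as [lU [HlU1 HlU2]].
  - intros U [p [_ HU]]. eapply open_ext; [| intro t; symmetry; apply HU].
    apply I_open_of_balls. intros t Ht.
    exists (Rmin (proj1_sig t - fst p) (snd p - proj1_sig t)).
    split; [apply Rmin_glb_lt; lra |]. intros t' Ht'.
    pose proof (Rmin_l (proj1_sig t - fst p) (snd p - proj1_sig t)).
    pose proof (Rmin_r (proj1_sig t - fst p) (snd p - proj1_sig t)).
    apply Rabs_def2 in Ht'. lra.
  - intros t Qt. destruct (piece_exists (proj1_sig t)) as [p [Hp Hq]];
      [apply I_bounds | rewrite gr_val; apply HQ; auto |].
    exists (fun t => fst p < proj1_sig t < snd p). split; [exists p; split; auto; tauto | auto].
  - assert (Hlp : exists lp, (forall p, In p lp -> piece p) /\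
       forall U, In U lU -> forall t, U t -> exists p, In p lp /\ fst p < proj1_sig t < snd p).
    { clear HlU2. induction lU as [| U0 lU IH].
      - exists nil. split; [intros p [] | intros U []].
      - destruct IH as [lp [H1 H2]]; [intros U HU; apply HlU1; right; auto |].
        destruct (HlU1 U0 (or_introl eq_refl)) as [p0 [Hp0 HU0]].
        exists (p0 :: lp). split; [intros p [<- | Hp]; auto |].
        intros U [<- | HU] t Ut.
        + exists p0. split; [left; auto |]. apply HU0; auto.
        + destruct (H2 U HU t Ut) as [p [Hp Hpt]]. exists p. split; [right |]; auto. }
    destruct Hlp as [lp [Hlp Hcov]]. exists lp. split; auto.
    intros t Qt. destruct (HlU2 t Qt) as [U [HU Ut]].
    destruct (Hcov U HU t Ut) as [p [Hp Hpt]]. exists p; split; auto; lra.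
Qed.

(** The pieces
    cover the compact set Q of those K whose U misses *; elsewhere g' = *. *)
Lemma approximation (lk : list ((I -> Prop) * (QT A -> Prop))) :
  (forall KU, In KU lk -> Defs.compact I_top (fst KU) /\ OY (snd KU) /\
                           forall t, fst KU t -> snd KU (g t)) ->
  exists (f : I -> X) (g' : I -> QT A), is_loop OX a f /\ is_loop OY star g' /\
    (forall t, specializes OY (qmap A (f t)) (g' t)) /\
    (forall KU, In KU lk -> forall t, fst KU t -> snd KU (g' t)).
Proof.
  intro Hlk.
  set (Q := fun t : I => exists KU, In KU lk /\ fst KU t /\ ~ snd KU star).
  assert (HQc : Defs.compact I_top Q).
  { apply (compact_finite_union I_top lk (fun U => ~ U star)). intros KU HKU; apply Hlk; auto. }
  assert (HQ : forall t, Q t -> ~ pcl (g t)).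
  { intros t [KU [HKU [Kt Ns]]] Z. apply Ns.
    apply (pcl_specializes_star X OX A a Ha _ Z); apply Hlk; auto. }
  destruct (pieces_cover Q HQc HQ) as [lp [Hlp Hcov]].
  destruct (trim_and_lift lp Hlp) as [f [g' [Hf [Hg' [Hs [Hon Hoff]]]]]].
  exists f, g'. split; [auto | split; [auto | split; [auto |]]].
  intros KU HKU t Kt. destruct (classic (covered lp (proj1_sig t))) as [Pt | Pt].
  - rewrite Hon; auto. apply Hlk; auto.
  - rewrite Hoff; auto. apply NNPP; intro Ns. apply Pt, Hcov. exists KU; auto.
Qed.

End Construction.

Lemma subbasic_constraints {Y} (OY : topology Y) (y : Y) (l : list (Loop OY y -> Prop))
    (gL : Loop OY y) :
  (forall V, In V l -> (exists (K : I -> Prop) (U : Y -> Prop),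
      Defs.compact I_top K /\ OY U /\
      forall h : Loop OY y, V h <-> (forall t, K t -> U (proj1_sig h t))) /\ V gL) ->
  exists lk : list ((I -> Prop) * (Y -> Prop)),
    (forall KU, In KU lk -> Defs.compact I_top (fst KU) /\ OY (snd KU) /\
                            forall t, fst KU t -> snd KU (proj1_sig gL t)) /\
    (forall h : Loop OY y, (forall KU, In KU lk -> forall t, fst KU t -> snd KU (proj1_sig h t)) ->
                           forall V, In V l -> V h).
Proof.
  induction l as [| V0 l IH]; intro H.
  - exists nil. split; [intros KU [] | intros h _ V []].
  - destruct IH as [lk [H1 H2]]; [intros V HV; apply H; right; auto |].
    destruct (H V0 (or_introl eq_refl)) as [[K [U [HK [HU HE]]]] V0g].
    exists ((K, U) :: lk). split.
    + intros KU [<- | HKU]; auto. simpl. split; auto. split; auto. apply HE; auto.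
    + intros h Hh V [<- | HV].
      * apply HE. intros t Kt. apply (Hh (K, U)); [left |]; auto.
      * apply H2; auto. intros KU HKU; apply Hh; right; auto.
Qed.

Lemma qmap_loop {X} (OX : topology X) (A : X -> Prop) a (f : I -> X) :
  is_loop OX a f -> is_loop (quot_top OX A) (qmap A a) (fun t => qmap A (f t)).
Proof.
  intros [Hfc [Hf0 Hf1]]. split; [| split].
  - intros V HV. apply (Hfc (fun x => V (qmap A x))). exact HV.
  - rewrite Hf0; auto.
  - rewrite Hf1; auto.
Qed.

(** Every basic neighbourhood of the class of a loop g at * contains the
    class [p o f] = [g'] given by the approximation lemma. *)
Theorem theorem3p2 (X : Type) (OX : topology X) (HX : is_topology OX)
  (A : X -> Prop) (HA : OX A) (Hpc : path_connected OX (closure OX A))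
  (a : X) (Ha : A a) :
  dense (pi1_top (quot_top OX A) (qmap A a)) (pstar_image OX A a).
Proof.
  intros [C [g [Hg ->]]] W HW Wc.
  set (gL := exist _ g Hg : Loop (quot_top OX A) (qmap A a)).
  assert (Wg : W (cls _ _ gL)) by (eapply eq_ind; [exact Wc | apply sig_ext; reflexivity]).
  destruct (generated_open_basic _ _ _ HW Wg) as [l [Hl1 Hl2]].
  destruct (subbasic_constraints _ _ l gL Hl1) as [lk [Hk1 Hk2]].
  destruct (approximation X OX HX A HA a Ha Hpc g Hg lk Hk1)
    as [f [g' [Hf [Hg' [Hs HN]]]]].
  set (g'L := exist _ g' Hg' : Loop (quot_top OX A) (qmap A a)).
  set (pfL := exist _ _ (qmap_loop OX A a f Hf) : Loop (quot_top OX A) (qmap A a)).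
  assert (E : cls _ _ pfL = cls _ _ g'L)
    by (apply sig_ext, hclass_specializes; auto; apply qmap_loop; auto).
  exists (cls _ _ pfL). split.
  - exists f. split; auto.
  - rewrite E. apply (Hl2 g'L), Hk2, HN.
Qed.
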